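(* Let $H_{\mathrm{gen}}$ be a generalized Hubbard Hamiltonian on a finite simple graph $G=(V,E)$ and let $\eta^\dagger=\sum_{\boldsymbol r}q_{\boldsymbol r}c^\dagger_{\boldsymbol r,\uparrow}c^\dagger_{\boldsymbol r,\downarrow}$ satisfy $[H_{\mathrm{gen}},\eta^\dagger]=\mathcal{E}\eta^\dagger$ for some $\mathcal{E}\in\mathbb{R}$. Let $M\ge1$, let $\mathcal{S}$ be a collection of $(M+1)$-element subsets of $V$, and for each $S\in\mathcal{S}$ and each spin assignment $\sigma:S\to\{\uparrow,\downarrow\}$ let $V^{\sigma}_S\in\mathbb{R}$. Define $$\hat I_{M+1}=\sum_{S\in\mathcal{S}}\ \sum_{\sigma:S\to\{\uparrow,\downarrow\}}V^{\sigma}_S\prod_{\boldsymbol r\in S}\hat n_{\boldsymbol r,\sigma(\boldsymbol r)},$$ and assume $\sum_{\sigma:S\to\{\uparrow,\downarrow\}}V^{\sigma}_S=0$ for every $S\in\mathcal{S}$. Let $H=H_{\mathrm{gen}}+\hat I_{M+1}$, $H_0=H$, $H_{n+1}=[H_n,\eta^\dagger]$, and let $\ket{\Omega}$ be the fermionic vacuum. Then $H\ket\Omega=0$, $H_1\ket\Omega=\mathcal{E}\eta^\dagger\ket\Omega$, $H_n\ket\Omega=0$ for $2\le n\le M$, $H_{M+1}=0$, and for every integer $n\ge0$, $$H\,(\eta^\dagger)^n\ket\Omega=n\mathcal{E}\,(\eta^\dagger)^n\ket\Omega.$$ (For $M=1$ this covers two-body density interactions $\hat I_2=\sum_{\sigma,\sigma'}\sum_{\{\boldsymbol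 r,\boldsymbol r'\}}V^{\sigma,\sigma'}_{\boldsymbol r,\boldsymbol r'}\hat n_{\boldsymbol r,\sigma}\hat n_{\boldsymbol r',\sigma'}$ over pairs of distinct sites with $\sum_{\sigma,\sigma'}V^{\sigma,\sigma'}_{\boldsymbol r,\boldsymbol r'}=0$ for each pair, e.g. nearest-neighbour $S^z S^z$ interactions.)
   Context: Generalized Hubbard Hamiltonian on a finite simple graph $G=(V,E)$ (each edge with a fixed orientation): $H_{\mathrm{gen}}=-\sum_{\sigma,\sigma'}\sum_{\{\boldsymbol r,\boldsymbol r'\}\in E}(t^{\sigma,\sigma'}_{\boldsymbol r,\boldsymbol r'}c^\dagger_{\boldsymbol r,\sigma}c_{\boldsymbol r',\sigma'}+t^{\sigma',\sigma}_{\boldsymbol r',\boldsymbol r}c^\dagger_{\boldsymbol r',\sigma'}c_{\boldsymbol r,\sigma})-\sum_{\boldsymbol r,\sigma}\mu_{\boldsymbol r,\sigma}\hat n_{\boldsymbol r,\sigma}+\sum_{\boldsymbol r}U_{\boldsymbol r}\hat n_{\boldsymbol r,\uparrow}\hat n_{\boldsymbol r,\downarrow}$ with $t^{\sigma,\sigma'}_{\boldsymbol r,\boldsymbol r'}=\overline{t^{\sigma',\sigma}_{\boldsymbol r',\boldsymbol r}}$ and real $\mu_{\boldsymbol r,\sigma},U_{\boldsymbol r}$; $c,c^\dagger$ are spin-1/2 fermion operators with canonical anticommutation relations, $\hat n_{\boldsymbol r,\sigma}=c^\dagger_{\boldsymbol r,\sigma}c_{\boldsymbol r,\sigma}$; $q_{\boldsymbol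 r}\in\mathbb{C}$. The vacuum $\ket\Omega$ is the state annihilated by all $c_{\boldsymbol r,\sigma}$. *)

From HB Require Import structures.
From mathcomp Require Import all_boot all_order all_algebra.
Set Implicit Arguments. Unset Strict Implicit. Unset Printing Implicit Defensive.
Import Order.TTheory GRing.Theory Num.Theory.
Local Open Scope ring_scope.

(* Fermionic Fock space on a finite site set V with spin 1/2.
   Modes are pairs (site, spin); spin true = up, false = down.
   Fock basis vectors |A> are indexed by occupation sets A : {set mode V};
   operators are square matrices over the Fock basis (indexed via enum_rank). *)

Definition up := true.
Definition down := false.

Section Fock.
Variables (V : finType) (C : numClosedFieldType).

Definition mode := (V * bool)%type.
Definition dimF := #|{set mode}|.
Definition op := 'M[C]_dimF.
Definition ket := 'cV[C]_dimF.

(* Jordan-Wigner sign: (-1)^(number of occupied modes of A preceding x). *)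
Definition jwsign (x : mode) (A : {set mode}) : C :=
  (-1) ^+ #|[set y in A | (enum_rank y < enum_rank x)%N]|.

(* annihilation operator c_x : c_x |B> = jwsign x (B\x) |B \ x> if x in B, else 0 *)
Definition ann (x : mode) : op :=
  \matrix_(i < dimF, j < dimF)
    (let A : {set mode} := enum_val i in let B : {set mode} := enum_val j in
     if (x \in B) && (A == B :\ x) then jwsign x A else 0).

Definition cre (x : mode) : op := map_mx Num.conj ((ann x)^T).

Definition num (x : mode) : op := cre x * ann x.

Definition vac : ket := \col_(i < dimF) (if (enum_val i : {set mode}) == set0 then 1 else 0).

Definition comm (A B : op) : op := A * B - B * A.

(* generalized Hubbard Hamiltonian; E = oriented edges,
   t r r' s s' = t^{s,s'}_{r,r'} *)
Definition Hgen (E : {set V * V}) (t : V -> V -> bool -> bool -> C)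
  (mu : V -> bool -> C) (U : V -> C) : op :=
  - (\sum_(s : bool) \sum_(s' : bool) \sum_(e in E)
       (t e.1 e.2 s s' *: (cre (e.1, s) * ann (e.2, s'))
        + t e.2 e.1 s' s *: (cre (e.2, s') * ann (e.1, s))))
  - (\sum_(r : V) \sum_(s : bool) mu r s *: num (r, s))
  + \sum_(r : V) U r *: (num (r, up) * num (r, down)).

Definition etad (q : V -> C) : op :=
  \sum_(r : V) q r *: (cre (r, up) * cre (r, down)).

Definition Iint (Scol : {set {set V}})
  (Vint : forall S : {set V}, {ffun {r : V | r \in S} -> bool} -> C) : op :=
  \sum_(S in Scol) \sum_(sg : {ffun {r : V | r \in S} -> bool})
     Vint S sg *: \prod_(r : {r : V | r \in S}) num (val r, sg r).

Definition Hseq (H eta : op) (n : nat) : op := iter n (fun X => comm X eta) H.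

End Fock.

From HB Require Import structures.
From mathcomp Require Import all_boot all_order all_algebra.
From mathcomp Require Import ring.
Set Implicit Arguments. Unset Strict Implicit. Unset Printing Implicit Defensive.
Import Order.TTheory GRing.Theory Num.Theory.
Local Open Scope ring_scope.

(* Write H_n = ad^n H where ad X = [X, eta^dagger].  The argument has three parts.
   1. Fock-space algebra: on the occupation basis |A> the operators c, c^dagger and
      n act explicitly, which gives [n_x, c^dagger_y] = delta_xy c^dagger_y, the
      anticommutation of creation operators, and hence that the pair creators
      P_r = c^dagger_{r,up} c^dagger_{r,down} commute with each other and satisfy
      [n_x, P_r] = delta_{site x, r} P_r; in particular [[n_x, eta], eta] = 0.
   2. Nested commutators of a product of m number operators on pairwise distinct
      sites (Leibniz rule, induction on m): ad^k vanishes for k > m, ad^m is m!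
      times a product of pair creators (independent of the spins), and ad^k kills
      the vacuum for k < m.  Summing with weights V^sigma_S of total zero, the
      interaction I satisfies ad^k I |Omega> = 0 for k <= M and ad^{M+1} I = 0;
      the hypothesis [H_gen, eta] = E eta gives ad^2 H_gen = 0, and H_gen kills the
      vacuum since every term ends with an annihilator.
   3. An abstract "eigenvalue tower" lemma: if H|v> = 0, ad H |v> = E eta|v> and
      ad^k H |v> = 0 for k >= 2, then H eta^n |v> = n E eta^n |v>. *)

Section Fock.
Variables (V : finType) (C : numClosedFieldType).
Local Notation mode := (mode V).
Local Notation op := (op V C).
Local Notation ket := (ket V C).
Local Notation vac := (vac V C).

Definition fock_basis (A : {set mode}) : ket :=
  \col_(i < dimF V) ((enum_val i == A)%:R : C).

Lemma mulmx_fock_basis (X : op) A : X *m fock_basis A = \col_i X i (enum_rank A).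
Proof.
apply/matrixP => i j; rewrite !mxE (bigD1 (enum_rank A)) //= mxE enum_rankK eqxx mulr1.
rewrite big1 ?addr0 // => k nk; rewrite mxE; case: eqP => [ek|]; last by rewrite mulr0.
by move: nk; rewrite -ek enum_valK eqxx.
Qed.

Lemma op_eq_on_basis (X Y : op) :
  (forall A, X *m fock_basis A = Y *m fock_basis A) -> X = Y.
Proof.
move=> h; apply/matrixP => i j; move: (h (enum_val j)) => /matrixP/(_ i ord0).
by rewrite !mulmx_fock_basis !mxE enum_valK.
Qed.

Lemma vac_fock_basis : vac = fock_basis set0.
Proof. by apply/matrixP => i j; rewrite !mxE; case: (_ == _). Qed.

Lemma mulmx_mulr (X Y : op) (v : ket) : (X * Y) *m v = X *m (Y *m v).
Proof. by rewrite mulmxA mulmxE. Qed.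

Lemma scale_mulAl (a : C) (X Y : op) : a *: (X * Y) = (a *: X) * Y.
Proof. exact: scalemxAl. Qed.
Lemma scale_mulAr (a : C) (X Y : op) : a *: (X * Y) = X * (a *: Y).
Proof. exact: scalemxAr. Qed.

Lemma jwsign_sqr (x : mode) (A : {set mode}) : jwsign C x A * jwsign C x A = 1.
Proof. by rewrite /jwsign -exprD addnn -mul2n exprM expr2 mulrNN mulr1 expr1n. Qed.

Lemma jwsign_conj (x : mode) (A : {set mode}) : Num.conj (jwsign C x A) = jwsign C x A.
Proof. by rewrite /jwsign rmorphXn rmorphN1. Qed.

Lemma jwsign_setU1 (x y : mode) (A : {set mode}) : y != x -> y \notin A ->
  jwsign C x (y |: A) = (if (enum_rank y < enum_rank x)%N then -1 else 1) * jwsign C x A.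
Proof.
move=> nyx yA; rewrite /jwsign; case: ifP => lt.
  have -> : [set z in y |: A | (enum_rank z < enum_rank x)%N] =
            y |: [set z in A | (enum_rank z < enum_rank x)%N].
    by apply/setP => z; rewrite !inE; case: (z =P y) => [->|] //=; rewrite lt.
  by rewrite cardsU1 inE (negbTE yA) /= exprS.
have -> : [set z in y |: A | (enum_rank z < enum_rank x)%N] =
          [set z in A | (enum_rank z < enum_rank x)%N].
  by apply/setP => z; rewrite !inE; case: (z =P y) => [->|] //=; rewrite lt (negbTE yA).
by rewrite mul1r.
Qed.

Lemma ann_fock_basis (x : mode) B : ann C x *m fock_basis B =
  if x \in B then jwsign C x (B :\ x) *: fock_basis (B :\ x) else 0.
Proof.
rewrite mulmx_fock_basis; apply/matrixP => i j; rewrite !mxE /= enum_rankK.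
case: (x \in B) => /=; last by rewrite mxE.
by rewrite !mxE; case: eqP => [->|_]; rewrite ?mulr1 ?mulr0.
Qed.

Lemma cre_fock_basis (x : mode) B : cre C x *m fock_basis B =
  if x \notin B then jwsign C x B *: fock_basis (x |: B) else 0.
Proof.
have swap (A : {set mode}) : (x \in A) && (B == A :\ x) = (x \notin B) && (A == x |: B).
  apply/idP/idP; first by case/andP => xA /eqP ->; rewrite setD11 /= setD1K ?eqxx.
  by case/andP => xnB /eqP ->; rewrite setU11 setU1K ?eqxx.
rewrite mulmx_fock_basis; apply/matrixP => i j; rewrite !mxE /= enum_rankK swap.
case: (x \in B) => /=; first by rewrite mxE conjC0.
by rewrite !mxE; case: eqP => _; rewrite ?mulr1 ?mulr0 ?jwsign_conj ?conjC0.
Qed.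

Lemma num_fock_basis (x : mode) B : num C x *m fock_basis B = (x \in B)%:R *: fock_basis B.
Proof.
rewrite /num mulmx_mulr ann_fock_basis.
case xB: (x \in B); last by rewrite mulmx0 scale0r.
by rewrite -scalemxAr cre_fock_basis setD11 /= scalerA jwsign_sqr scale1r setD1K // scale1r.
Qed.

Lemma ann_vac (x : mode) : ann C x *m vac = 0.
Proof. by rewrite vac_fock_basis ann_fock_basis in_set0. Qed.

Lemma num_vac (x : mode) : num C x *m vac = 0.
Proof. by rewrite /num mulmx_mulr ann_vac mulmx0. Qed.

Lemma num_cre (x y : mode) :
  num C x * cre C y = cre C y * num C x + (x == y)%:R *: cre C y.
Proof.
apply: op_eq_on_basis => B.
rewrite mulmxDl -scalemxAl (mulmx_mulr (num C x)) (mulmx_mulr _ (num C x)).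
rewrite num_fock_basis -scalemxAr cre_fock_basis.
case yB: (y \in B) => /=; first by rewrite mulmx0 !scaler0 addr0.
rewrite -scalemxAr num_fock_basis !scalerA in_setU1 -scalerDl; congr (_ *: _).
by case: (x =P y) => [->|_]; rewrite ?yB /=; ring.
Qed.

Lemma cre_anticomm (x y : mode) : x != y -> cre C x * cre C y = - (cre C y * cre C x).
Proof.
move=> nxy; apply: op_eq_on_basis => B; rewrite mulNmx !mulmx_mulr !cre_fock_basis.
case xB: (x \in B); case yB: (y \in B) => /=; rewrite ?mulmx0 ?oppr0 //.
- by rewrite -scalemxAr cre_fock_basis in_setU1 xB orbT /= scaler0.
- by rewrite -scalemxAr cre_fock_basis in_setU1 yB orbT /= scaler0 oppr0.
rewrite -!scalemxAr !cre_fock_basis !in_setU1 xB yB (eq_sym y) (negbTE nxy) /=.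
rewrite !scalerA setUCA -scaleNr; congr (_ *: _).
rewrite !jwsign_setU1 ?xB ?yB // 1?eq_sym //.
case: (ltngtP (enum_rank x) (enum_rank y)) => h; [ring | ring |].
by move: nxy; rewrite (enum_rank_inj (val_inj h)) eqxx.
Qed.

Definition pair_cre (r : V) : op := cre C (r, up) * cre C (r, down).

Lemma commute_of_anticomm (a b c d : op) : a * c = - (c * a) -> a * d = - (d * a) ->
  b * c = - (c * b) -> b * d = - (d * b) -> (a * b) * (c * d) = (c * d) * (a * b).
Proof.
move=> ac ad bc bd.
rewrite !mulrA -(mulrA a b c) bc mulrN mulNr.
rewrite mulrA -(mulrA (a * c) b d) bd mulrN opprK mulrA.
by rewrite ac mulNr mulNr -(mulrA c a d) ad mulrN mulNr opprK mulrA.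
Qed.

Lemma pair_cre_comm r s : pair_cre r * pair_cre s = pair_cre s * pair_cre r.
Proof.
case: (r =P s) => [->//|nrs]; apply: commute_of_anticomm; apply: cre_anticomm;
  by apply/eqP => -[] /eqP; rewrite ?(introF eqP nrs).
Qed.

Lemma num_pair_cre (x : mode) r :
  comm (num C x) (pair_cre r) = (x.1 == r)%:R *: pair_cre r.
Proof.
rewrite /comm /pair_cre mulrA num_cre mulrDl -mulrA num_cre mulrDr !mulrA.
rewrite addrAC [X in X + _ = _]addrAC subrr add0r -scale_mulAr -scale_mulAl -scalerDl.
congr (_ *: _); case: x => r' s /=.
case: (r' =P r) => [->|nr]; first by case: s; rewrite !xpair_eqE eqxx /= ?addr0 ?add0r.
by rewrite !xpair_eqE (introF eqP nr) /= addr0.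
Qed.

Lemma num_pair_cre_far (x : mode) r : x.1 != r -> num C x * pair_cre r = pair_cre r * num C x.
Proof.
by move=> h; apply/eqP; rewrite -subr_eq0 -/(comm _ _) num_pair_cre (negbTE h) scale0r.
Qed.

Definition kills_vac (X : op) := X *m vac = 0.

Lemma kills_vacD X Y : kills_vac X -> kills_vac Y -> kills_vac (X + Y).
Proof. by rewrite /kills_vac mulmxDl => -> ->; rewrite addr0. Qed.
Lemma kills_vacN X : kills_vac X -> kills_vac (- X).
Proof. by rewrite /kills_vac mulNmx => ->; rewrite oppr0. Qed.
Lemma kills_vacZ a X : kills_vac X -> kills_vac (a *: X).
Proof. by rewrite /kills_vac -scalemxAl => ->; rewrite scaler0. Qed.
Lemma kills_vacMl X Y : kills_vac X -> kills_vac (Y * X).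
Proof. by rewrite /kills_vac mulmx_mulr => ->; rewrite mulmx0. Qed.
Lemma kills_vac_sum (I : Type) (r : seq I) (P : pred I) (F : I -> op) :
  (forall i, P i -> kills_vac (F i)) -> kills_vac (\sum_(i <- r | P i) F i).
Proof. by move=> h; apply: big_ind => //; [rewrite /kills_vac mul0mx | exact: kills_vacD]. Qed.

(* Every term of H_gen ends with an annihilator, so H_gen |Omega> = 0. *)
Lemma Hgen_vac E t mu U : kills_vac (Hgen E t mu U).
Proof.
apply: kills_vacD; first apply: kills_vacD.
- apply/kills_vacN/kills_vac_sum => s _; apply: kills_vac_sum => s' _.
  apply: kills_vac_sum => e _.
  by apply: kills_vacD; apply/kills_vacZ/kills_vacMl/ann_vac.
- by apply/kills_vacN/kills_vac_sum => r _; apply: kills_vac_sum => s _;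
    apply/kills_vacZ/num_vac.
- by apply: kills_vac_sum => r _; apply/kills_vacZ/kills_vacMl/num_vac.
Qed.

Section NestedCommutators.
Variable eta : op.

Lemma commD X Y : comm (X + Y) eta = comm X eta + comm Y eta.
Proof. by rewrite /comm mulrDl mulrDr opprD addrACA. Qed.
Lemma commZ a X : comm (a *: X) eta = a *: comm X eta.
Proof. by rewrite /comm -scale_mulAl -scale_mulAr scalerBr. Qed.
Lemma commMn X n : comm (X *+ n) eta = comm X eta *+ n.
Proof. by rewrite /comm mulrnAl mulrnAr mulrnBl. Qed.
Lemma commM X Y : comm (X * Y) eta = comm X eta * Y + X * comm Y eta.
Proof. by rewrite /comm mulrBl mulrBr !mulrA [RHS]addrC addrA subrK. Qed.

Lemma HseqS X k : Hseq X eta k.+1 = comm (Hseq X eta k) eta.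
Proof. by []. Qed.
Lemma HseqD X Y k : Hseq (X + Y) eta k = Hseq X eta k + Hseq Y eta k.
Proof. by elim: k => //= k IH; rewrite IH commD. Qed.
Lemma HseqZ a X k : Hseq (a *: X) eta k = a *: Hseq X eta k.
Proof. by elim: k => //= k IH; rewrite IH commZ. Qed.
Lemma Hseq0 k : Hseq 0 eta k = 0.
Proof. by elim: k => //= k IH; rewrite IH /comm mul0r mulr0 subrr. Qed.
Lemma Hseq_sum (I : Type) (r : seq I) (P : pred I) (F : I -> op) k :
  Hseq (\sum_(i <- r | P i) F i) eta k = \sum_(i <- r | P i) Hseq (F i) eta k.
Proof. by apply: (big_morph (fun X => Hseq X eta k)) => [X Y|]; [exact: HseqD | exact: Hseq0]. Qed.

Lemma Hseq_ge X m k : Hseq X eta m = 0 -> (m <= k)%N -> Hseq X eta k = 0.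
Proof. by move=> h /subnK <-; rewrite /Hseq iterD -/(Hseq X eta m) h -/(Hseq 0 eta _) Hseq0. Qed.

Lemma Hseq_eigen_comm X c : comm X eta = c *: eta -> Hseq X eta 2 = 0.
Proof. by move=> h; rewrite /= h commZ /comm subrr scaler0. Qed.

Lemma Hseq_mul X Y k : comm (comm X eta) eta = 0 ->
  Hseq (X * Y) eta k.+1 = X * Hseq Y eta k.+1 + (comm X eta * Hseq Y eta k) *+ k.+1.
Proof.
move=> h; elim: k => [|k IH]; first by rewrite /= commM mulr1n addrC.
rewrite HseqS IH commD commMn !commM h mul0r add0r -HseqS.
by rewrite (addrC _ (X * _)) -addrA -mulrS.
Qed.

Lemma eigen_tower H (v : ket) En :
  H *m v = 0 -> Hseq H eta 1 *m v = En *: (eta *m v) ->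
  (forall k, (2 <= k)%N -> Hseq H eta k *m v = 0) ->
  forall n, H *m (eta ^+ n *m v) = (n%:R * En) *: (eta ^+ n *m v).
Proof.
move=> H0 H1 Hhigh.
have shift X n : X *m (eta ^+ n.+1 *m v) =
    eta *m (X *m (eta ^+ n *m v)) + comm X eta *m (eta ^+ n *m v).
  rewrite exprS mulmx_mulr; move: (eta ^+ n *m v) => w.
  by rewrite -!mulmx_mulr -mulmxDl /comm addrC subrK.
have high n k : (2 <= k)%N -> Hseq H eta k *m (eta ^+ n *m v) = 0.
  elim: n k => [|n IH] k hk; first by rewrite expr0 mul1mx Hhigh.
  by rewrite shift -HseqS !IH // ?mulmx0 ?addr0 // ltnW.
have first n : Hseq H eta 1 *m (eta ^+ n *m v) = En *: (eta ^+ n.+1 *m v).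
  elim: n => [|n IH]; first by rewrite expr0 mul1mx H1 expr1.
  by rewrite shift IH -HseqS high // addr0 -scalemxAr -mulmx_mulr -exprS.
elim=> [|n IH]; first by rewrite expr0 mul1mx H0 mul0r scale0r.
rewrite shift IH -[comm H eta]/(Hseq H eta 1) first -scalemxAr -mulmx_mulr -exprS.
by rewrite -scalerDl mulrSr mulrDl mul1r.
Qed.

End NestedCommutators.

Section PairingOperator.
Variable q : V -> C.
Local Notation eta := (etad q).

Lemma comm_num_eta (x : mode) : comm (num C x) eta = q x.1 *: pair_cre x.1.
Proof.
rewrite /comm /etad mulr_sumr mulr_suml -sumrB.
rewrite (eq_bigr (fun r => (q r * (x.1 == r)%:R) *: pair_cre r)); last first.
  by move=> r _; rewrite -scale_mulAr -scale_mulAl -scalerBr -/(comm _ _) num_pair_cre scalerA.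
rewrite (bigD1 x.1) //= eqxx mulr1 big1 ?addr0 // => r nr.
by rewrite eq_sym (negbTE nr) mulr0 scale0r.
Qed.

Lemma comm_pair_cre_eta r : comm (pair_cre r) eta = 0.
Proof.
rewrite /comm /etad mulr_sumr mulr_suml -sumrB big1 // => s _.
by rewrite -scale_mulAr -scale_mulAl pair_cre_comm subrr.
Qed.

Lemma comm2_num_eta (x : mode) : comm (comm (num C x) eta) eta = 0.
Proof. by rewrite comm_num_eta commZ comm_pair_cre_eta scaler0. Qed.

Definition num_prod (s : seq mode) : op := \prod_(x <- s) num C x.
Definition pair_prod (s : seq mode) : op := \prod_(x <- s) (q x.1 *: pair_cre x.1).

Lemma num_pair_prod (x : mode) s :
  x.1 \notin map fst s -> num C x * pair_prod s = pair_prod s * num C x.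
Proof.
elim: s => [|y s IH] /=; first by rewrite /pair_prod !big_nil mulr1 mul1r.
rewrite inE negb_or => /andP [nxy ns]; rewrite /pair_prod !big_cons -/(pair_prod s).
by rewrite mulrA -scale_mulAr num_pair_cre_far // scale_mulAl -mulrA IH // mulrA.
Qed.

Lemma Hseq_num_prod s : uniq (map fst s) ->
  [/\ Hseq (num_prod s) eta (size s).+1 = 0,
      Hseq (num_prod s) eta (size s) = pair_prod s *+ (size s)`!
    & forall k, (k < size s)%N -> kills_vac (Hseq (num_prod s) eta k)].
Proof.
elim: s => [_|x s IH].
  by rewrite /num_prod /pair_prod !big_nil; split=> //=; rewrite /comm mul1r mulr1 subrr.
rewrite -[size (x :: s)]/(size s).+1 => /andP [nx us]; case: (IH us) => {IH} IHtop IHm IHlow.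
have FE : num_prod (x :: s) = num C x * num_prod s by rewrite /num_prod big_cons.
have low k : (k <= size s)%N -> kills_vac (num C x * Hseq (num_prod s) eta k).
  rewrite leq_eqVlt => /orP [/eqP -> | lt]; last exact/kills_vacMl/IHlow.
  by rewrite IHm mulrnAr num_pair_prod // -mulrnAl; apply/kills_vacMl/num_vac.
split.
- rewrite FE Hseq_mul ?comm2_num_eta // IHtop (Hseq_ge IHtop (leqnSn _)).
  by rewrite !mulr0 mul0rn addr0.
- rewrite FE Hseq_mul ?comm2_num_eta // IHtop mulr0 add0r IHm comm_num_eta.
  by rewrite /pair_prod big_cons mulrnAr -mulrnA factS mulnC.
case=> [|k] hk; first by rewrite FE; apply: (low 0).
rewrite FE Hseq_mul ?comm2_num_eta //; apply: kills_vacD; first exact: low.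
by rewrite -mulr_natl; apply/kills_vacMl/kills_vacMl/IHlow.
Qed.

Definition site_num_prod (S : {set V}) (sg : {ffun {r : V | r \in S} -> bool}) : op :=
  \prod_(r : {r : V | r \in S}) num C (val r, sg r).
Definition site_pair_prod (S : {set V}) : op :=
  \prod_(r : {r : V | r \in S}) (q (val r) *: pair_cre (val r)).

Lemma Hseq_site_num_prod (S : {set V}) (sg : {ffun {r : V | r \in S} -> bool}) :
  [/\ Hseq (site_num_prod sg) eta #|S|.+1 = 0,
      Hseq (site_num_prod sg) eta #|S| = site_pair_prod S *+ #|S|`!
    & forall k, (k < #|S|)%N -> kills_vac (Hseq (site_num_prod sg) eta k)].
Proof.
set s := map (fun r : {r : V | r \in S} => (val r, sg r)) (index_enum {r : V | r \in S}).
have -> : site_num_prod sg = num_prod s by rewrite /num_prod big_map.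
have -> : site_pair_prod S = pair_prod s by rewrite /pair_prod big_map.
have -> : #|S| = size s.
  by rewrite size_map -[index_enum _]enumT -cardT card_sig; apply: eq_card => z; rewrite inE.
by apply: Hseq_num_prod; rewrite -map_comp (map_inj_uniq val_inj) // index_enum_uniq.
Qed.

Section Interaction.
Variables (Scol : {set {set V}}) (m : nat).
Variable Vint : forall S : {set V}, {ffun {r : V | r \in S} -> bool} -> C.
Hypothesis card_Scol : forall S, S \in Scol -> #|S| = m.

Lemma Hseq_Iint k : Hseq (Iint Scol Vint) eta k =
  \sum_(S in Scol) \sum_(sg : {ffun {r : V | r \in S} -> bool})
     @Vint S sg *: Hseq (site_num_prod sg) eta k.
Proof.
rewrite /Iint Hseq_sum; apply: eq_bigr => S _; rewrite Hseq_sum.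
by apply: eq_bigr => sg _; rewrite HseqZ.
Qed.

Lemma Hseq_Iint_vac k : (k < m)%N -> kills_vac (Hseq (Iint Scol Vint) eta k).
Proof.
move=> hk; rewrite Hseq_Iint; apply: kills_vac_sum => S SS.
apply: kills_vac_sum => sg _; apply: kills_vacZ.
by case: (Hseq_site_num_prod sg) => _ _; apply; rewrite card_Scol.
Qed.

Lemma Hseq_Iint_top :
  (forall S, S \in Scol -> \sum_(sg : {ffun {r : V | r \in S} -> bool}) @Vint S sg = 0) ->
  Hseq (Iint Scol Vint) eta m = 0.
Proof.
move=> Vsum0; rewrite Hseq_Iint big1 // => S SS.
rewrite (eq_bigr (fun sg => @Vint S sg *: (site_pair_prod S *+ #|S|`!))).
  by rewrite -scaler_suml Vsum0 // scale0r.
by move=> sg _; rewrite -(card_Scol SS); case: (Hseq_site_num_prod sg) => _ -> _.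
Qed.

End Interaction.
End PairingOperator.
End Fock.

Theorem mainTheorem6 (V : finType) (C : numClosedFieldType)
  (E : {set V * V})
  (HEloop : forall r : V, (r, r) \notin E)
  (HEorient : forall r r' : V, (r, r') \in E -> (r', r) \notin E)
  (t : V -> V -> bool -> bool -> C)
  (Ht : forall r r' : V, (r, r') \in E ->
          forall s s' : bool, t r r' s s' = Num.conj (t r' r s' s))
  (mu : V -> bool -> C) (Hmu : forall r s, mu r s \is Num.real)
  (U : V -> C) (HU : forall r, U r \is Num.real)
  (q : V -> C) (En : C) (HEn : En \is Num.real)
  (Heta : comm (Hgen E t mu U) (etad q) = En *: etad q)
  (M : nat) (HM : (1 <= M)%N)
  (Scol : {set {set V}}) (HS : forall S, S \in Scol -> #|S| = M.+1)
  (Vint : forall S : {set V}, {ffun {r : V | r \in S} -> bool} -> C)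
  (HVreal : forall S sg, Vint S sg \is Num.real)
  (HVsum : forall S, S \in Scol -> \sum_(sg : {ffun {r : V | r \in S} -> bool}) Vint S sg = 0) :
  let H := Hgen E t mu U + Iint Scol Vint in
  let eta := etad q in
  [/\ H *m vac V C = 0,
      Hseq H eta 1 *m vac V C = En *: (eta *m vac V C),
      (forall n : nat, (2 <= n <= M)%N -> Hseq H eta n *m vac V C = 0),
      Hseq H eta M.+1 = 0
    & forall n : nat, H *m (eta ^+ n *m vac V C) = (n%:R * En) *: (eta ^+ n *m vac V C)].
Proof.
move=> H eta.
have Hg2 : Hseq (Hgen E t mu U) eta 2 = 0 by apply: Hseq_eigen_comm Heta.
have Ilow k : (k <= M)%N -> kills_vac (Hseq (Iint Scol Vint) eta k).
  exact: (Hseq_Iint_vac q Vint HS).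
have Htop : Hseq H eta M.+1 = 0.
  by rewrite HseqD (Hseq_ge Hg2) // (Hseq_Iint_top q HS HVsum) addr0.
have H0 : H *m vac V C = 0 by apply: kills_vacD; [exact: Hgen_vac | exact: (Ilow 0)].
have H1 : Hseq H eta 1 *m vac V C = En *: (eta *m vac V C).
  by rewrite HseqD mulmxDl Ilow // addr0 /= Heta -scalemxAl.
have Hhigh k : (2 <= k)%N -> Hseq H eta k *m vac V C = 0.
  move=> hk; case: (leqP k M) => hkM; last by rewrite (Hseq_ge Htop hkM) mul0mx.
  by rewrite HseqD (Hseq_ge Hg2 hk) add0r; apply: Ilow.
split=> //; first by move=> n /andP [hn _]; apply: Hhigh.
exact: eigen_tower.
Qed.
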